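(* Let $G$ be a connected graph of order $n$ with maximum degree $\Delta$, and let $k\ge\chi(G)$ be an integer. Then $\mathrm{sn}(G,k)=n$ if and only if $k>\Delta+1$. Also, $\underline{\mathrm{lcs}}(G,k)=n$ if and only if $k>\Delta+1$.
   Context: All graphs are finite and simple. For a graph $G=(V,E)$ and an integer $k\ge\chi(G)$, a proper $k$-colouring is a map $c:V\to[k]$ with $c(u)\neq c(v)$ for every edge $uv$. A set $S\subseteq V$ is a determining set for $(G,c)$ if there is no proper $k$-colouring $c'\neq c$ of $G$ with $c'(s)=c(s)$ for all $s\in S$. A critical set for $(G,c)$ is an inclusion-minimal determining set. $\mathrm{scs}(G,c)$ and $\mathrm{lcs}(G,c)$ are the sizes of a smallest resp. largest critical set for $(G,c)$. $\mathrm{sn}(G,k)$ is the minimum of $\mathrm{scs}(G,c)$ over all proper $k$-colourings $c$ (equivalently the minimum number of vertices coloured in a partial colouring having a unique extension to a proper $k$-colouring), and $\underline{\mathrm{lcs}}(G,k)$ is the minimum of $\mathrm{lcs}(G,c)$ over all proper $k$-colourings $c$. *)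

From mathcomp Require Import all_boot.
Set Implicit Arguments. Unset Strict Implicit. Unset Printing Implicit Defensive.

Section Graphs.
Variable T : finType.
Variable e : rel T.

Definition simple_graph : Prop := symmetric e /\ irreflexive e.

Definition connected_graph : Prop := forall x y : T, connect e x y.

Definition degree (x : T) : nat := #|[set y | e x y]|.

Definition max_degree : nat := \max_(x : T) degree x.

Definition proper_col (k : nat) (c : {ffun T -> 'I_k}) : bool :=
  [forall x, forall y, e x y ==> (c x != c y)].

Definition colourable (k : nat) : bool :=
  [exists c : {ffun T -> 'I_k}, proper_col c].

(* chromatic number: least k admitting a proper k-colouring
   (a loopless graph is always #|T|-colourable, so the range k <= #|T| suffices) *)
Definition chi : nat := \big[minn/#|T|]_(k < #|T|.+1 | colourable k) k.

Section Colouring.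
Variable k : nat.
Variable c : {ffun T -> 'I_k}.

Definition determining (S : {set T}) : bool :=
  [forall c' : {ffun T -> 'I_k},
     (proper_col c' && [forall s in S, c' s == c s]) ==> (c' == c)].

Definition critical (S : {set T}) : bool :=
  determining S && [forall S' : {set T}, (S' \proper S) ==> ~~ determining S'].

(* smallest / largest size of a critical set (critical sets exist since
   setT is determining; all sizes are <= #|T|) *)
Definition scs : nat := \big[minn/#|T|]_(S : {set T} | critical S) #|S|.
Definition lcs : nat := \max_(S : {set T} | critical S) #|S|.
End Colouring.

Definition sn (k : nat) : nat :=
  \big[minn/#|T|]_(c : {ffun T -> 'I_k} | proper_col c) scs c.
Definition lcs_low (k : nat) : nat :=
  \big[minn/#|T|]_(c : {ffun T -> 'I_k} | proper_col c) lcs c.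
End Graphs.

(** If [Δ + 1 < k], any vertex [x] outside a set [S] can be recoloured, since its
    closed neighbourhood uses at most [Δ + 1] colours; so [V] is the only
    determining set and every critical set has [n] elements.

    If [k <= Δ + 1], some proper [k]-colouring has a vertex [x] whose closed
    neighbourhood carries all [k] colours: among the proper colourings, take one
    maximising the number of colours seen by a vertex [v] of maximum degree.  If no
    vertex saw all colours, a colour [j] missing around [v] could be emptied by
    giving each vertex of colour [j] a colour missing around it, and then [j] could
    be given to one of two equally coloured neighbours of [v].  For such a colouring
    [V :\ x] is determining, so no critical set is all of [V]. *)

From mathcomp Require Import all_boot order.
Set Implicit Arguments. Unset Strict Implicit. Unset Printing Implicit Defensive.
Import Order.TTheory.

Lemma bigminn_le_cond (I : finType) (P : pred I) (F : I -> nat) a i0 :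
  P i0 -> \big[minn/a]_(i | P i) F i <= F i0.
Proof. by move=> Pi0; apply: (bigmin_le_cond a F Pi0). Qed.

Lemma bigminn_eq_id (I : finType) (P : pred I) (F : I -> nat) a :
  (forall i, P i -> a <= F i) -> \big[minn/a]_(i | P i) F i = a.
Proof. exact: (@bigmin_eq_id _ nat). Qed.

Section CriticalSets.
Variables (T : finType) (e : rel T).
Hypothesis simple : simple_graph e.

Lemma edge_sym x y : e x y -> e y x.
Proof. by case: simple => sym _; rewrite sym. Qed.

Lemma edge_neq x y : e x y -> x != y.
Proof. by case: simple => _ irr; apply: contraTneq => ->; rewrite irr. Qed.

Lemma colourable_widen m n : m <= n -> colourable e m -> colourable e n.
Proof.
move=> le_mn /existsP[c /forallP pc]; apply/existsP.
exists [ffun x => widen_ord le_mn (c x)]; apply/forallP=> x; apply/forallP=> y.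
by rewrite !ffunE -val_eqE /= val_eqE; apply: (forallP (pc x)).
Qed.

Lemma colourable_card : colourable e #|T|.
Proof.
apply/existsP; exists [ffun x => enum_rank x]; apply/forallP=> x; apply/forallP=> y.
by apply/implyP=> /edge_neq; rewrite !ffunE (inj_eq enum_rank_inj).
Qed.

Lemma colourable_chi : colourable e (chi e).
Proof.
apply: (big_ind (colourable e)) => //; first exact: colourable_card.
by move=> m n col_m col_n; rewrite /minn; case: ifP.
Qed.

Lemma leq_max_degree x : degree e x <= max_degree e.
Proof. exact: leq_bigmax. Qed.

Section Colourings.
Variable k : nat.
Implicit Types (c : {ffun T -> 'I_k}) (j : 'I_k) (S : {set T}).

Lemma proper_colP c : reflect (forall x y, e x y -> c x != c y) (proper_col e c).
Proof.
apply: (iffP forallP) => [pc x y | pc x]; first exact/implyP/(forallP (pc x)).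
by apply/forallP=> y; apply/implyP/pc.
Qed.

Definition seen c x : {set 'I_k} := c @: [set y | e x y].

Definition palette c x : {set 'I_k} := c x |: seen c x.

Definition full_palette c x : bool := palette c x == [set: 'I_k].

Definition recolour c x j : {ffun T -> 'I_k} := [ffun y => if y == x then j else c y].

Lemma mem_seen c x y : e x y -> c y \in seen c x.
Proof. by move=> exy; apply: imset_f; rewrite inE. Qed.

Lemma card_palette c x : #|palette c x| <= (degree e x).+1.
Proof. by rewrite (leq_trans (leq_card_setU _ _)) // cards1 ltnS leq_imset_card. Qed.

Lemma proper_col_notin_seen c x : proper_col e c -> c x \notin seen c x.
Proof.
move=> /proper_colP pc; apply/imsetP=> -[y]; rewrite inE => exy.
by apply/eqP; apply: pc.
Qed.

Lemma recolour_proper c x j :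
  proper_col e c -> j \notin seen c x -> proper_col e (recolour c x j).
Proof.
move=> /proper_colP pc jN; apply/proper_colP=> y z eyz; rewrite !ffunE.
case: (eqVneq y x) eyz => [-> | yx] eyz; case: (eqVneq z x) eyz => [-> | zx] eyz.
- by have := edge_neq eyz; rewrite eqxx.
- by apply: contraNneq jN => ->; apply: mem_seen.
- by apply: contraNneq jN => <-; apply/mem_seen/edge_sym.
- exact: pc.
Qed.

Lemma determining_setD1 c x : full_palette c x -> determining e c (setT :\ x).
Proof.
move=> /eqP full; apply/forallP=> c'; apply/implyP=> /andP[pc' /forall_inP agree].
have off y : y != x -> c' y = c y by move=> yx; apply/eqP/agree; rewrite !inE yx.
have seen_eq : seen c' x = seen c x.
  by apply: eq_in_imset => y; rewrite inE => /edge_neq; rewrite eq_sym => /off.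
have : c' x \in palette c x by rewrite full inE.
rewrite in_setU1 -seen_eq (negbTE (proper_col_notin_seen x pc')) orbF => /eqP at_x.
by apply/eqP/ffunP=> y; case: (eqVneq y x) => [-> | /off].
Qed.

Lemma determining_setT c : determining e c setT.
Proof.
apply/forallP=> c'; apply/implyP=> /andP[_ agree].
by apply/eqP/ffunP=> x; apply/eqP/(forall_inP agree); rewrite inE.
Qed.

Lemma exists_critical c : exists S, critical e c S.
Proof.
have [S minS] : {S | minset (determining e c) S}.
  by apply: ex_minset; exists setT; apply: determining_setT.
exists S; rewrite /critical (minsetp minS); apply/forall_inP=> S' ltS'S.
apply/negP=> detS'; have eqS := minsetinf minS detS' (proper_sub ltS'S).
by rewrite eqS properxx in ltS'S.
Qed.

Lemma critical_card_lt c x S : full_palette c x -> critical e c S -> #|S| < #|T|.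
Proof.
move=> full /andP[_ /forall_inP minimal].
suff : S \proper setT by move/proper_card; rewrite cardsT.
rewrite properT; apply/eqP=> ST; have := minimal (setT :\ x).
by rewrite ST determining_setD1 // => /(_ (properD1 (in_setT x))).
Qed.

Lemma scs_lt_card c x : full_palette c x -> scs e c < #|T|.
Proof.
move=> full; have [S critS] := exists_critical c.
apply: leq_ltn_trans (critical_card_lt full critS).
exact: bigminn_le_cond critS.
Qed.

Lemma lcs_lt_card c x : full_palette c x -> lcs e c < #|T|.
Proof.
move=> full; have [S critS] := exists_critical c.
have : 0 < #|critical e c| by apply/card_gt0P; exists S.
case/(eq_bigmax_cond (fun S => #|S|)) => S' critS' lcsE.
by rewrite [lcs e c]lcsE (critical_card_lt full critS').
Qed.

Lemma determining_eq_setT c S :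
  proper_col e c -> max_degree e + 1 < k -> determining e c S -> S = setT.
Proof.
move=> pc kD /forallP det_S; apply/setP=> x; rewrite inE; apply: contraT => xNS.
have small : #|palette c x| < #|'I_k|.
  rewrite card_ord; apply: leq_ltn_trans (card_palette c x) _.
  by rewrite -addn1 (leq_ltn_trans _ kD) // leq_add2r leq_max_degree.
have /subsetPn[j _ jN] : ~~ ([set: 'I_k] \subset palette c x).
  by apply: contraL small => /subset_leq_card; rewrite cardsT -leqNgt.
have jNseen : j \notin seen c x by apply: contra jN; apply: setU1r.
move/implyP: (det_S (recolour c x j)); rewrite recolour_proper //=.
have -> : [forall s in S, recolour c x j s == c s].
  apply/forall_inP=> s sS; rewrite ffunE.
  by case: (eqVneq s x) => [sx | //]; rewrite -sx sS in xNS.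
move=> /(_ isT) /eqP/ffunP/(_ x); rewrite ffunE eqxx => jE.
by rewrite jE setU11 in jN.
Qed.

Lemma critical_setT c :
  proper_col e c -> max_degree e + 1 < k -> critical e c setT.
Proof.
move=> pc kD; rewrite /critical determining_setT.
apply/forall_inP=> S ltST; apply: contraL ltST => /(determining_eq_setT pc kD) ->.
by rewrite properxx.
Qed.

Lemma scs_eq_card c : proper_col e c -> max_degree e + 1 < k -> scs e c = #|T|.
Proof.
move=> pc kD; apply: bigminn_eq_id => S /andP[detS _].
by rewrite (determining_eq_setT pc kD detS) cardsT.
Qed.

Lemma lcs_eq_card c : proper_col e c -> max_degree e + 1 < k -> lcs e c = #|T|.
Proof.
move=> pc kD; apply/eqP; rewrite eqn_leq; apply/andP; split.
  by apply/bigmax_leqP=> S _; apply: max_card.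
by rewrite -[X in X <= _]cardsT; apply: (leq_bigmax_cond _ (critical_setT pc kD)).
Qed.

Lemma recolour_class c j :
  proper_col e c -> (forall x, c x = j -> ~~ full_palette c x) ->
  exists c1, [/\ proper_col e c1, forall x, c1 x != j
                & forall x, c x != j -> c1 x = c x].
Proof.
move=> /proper_colP pc not_full.
pose c1 := [ffun x => if c x == j then odflt j [pick i in ~: palette c x] else c x].
have c1_new x : c x = j -> c1 x \notin palette c x.
  move=> cxj; rewrite ffunE cxj eqxx; case: pickP => [i | none]; first by rewrite inE.
  case/negP: (not_full x cxj); rewrite /full_palette eqEsubset subsetT.
  by apply/subsetP=> i _; have := none i; rewrite inE => /negbFE.
have c1_old x : c x != j -> c1 x = c x by move=> cxNj; rewrite ffunE (negbTE cxNj).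
have new_old x y : e x y -> c x = j -> c y != j -> c1 x != c1 y.
  move=> exy cxj cyNj; rewrite (c1_old y cyNj).
  by apply: contraNneq (c1_new x cxj) => ->; apply/setU1r/mem_seen.
exists c1; split.
- apply/proper_colP=> x y exy.
  case: (eqVneq (c x) j) => [cxj | cxNj]; case: (eqVneq (c y) j) => [cyj | cyNj].
  + by have := pc x y exy; rewrite cxj cyj eqxx.
  + exact: new_old.
  + by rewrite eq_sym; apply/new_old/cxNj/cyj/edge_sym.
  + by rewrite !c1_old //; apply: pc.
- move=> x; case: (eqVneq (c x) j) => [cxj | cxNj]; last by rewrite c1_old.
  by apply: contraNneq (c1_new x cxj) => ->; rewrite -cxj setU11.
- exact: c1_old.
Qed.

Lemma seen_grows_unused c v j :
  proper_col e c -> (forall x, c x != j) -> #|seen c v| < degree e v ->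
  exists2 c2, proper_col e c2 & #|seen c v| < #|seen c2 v|.
Proof.
move=> pc unused lt_deg; set N := [set y | e v y].
have [u Nu dup] : exists2 u, u \in N & c u \in c @: (N :\ u).
  apply/exists_inP; apply: contraLR lt_deg => /exists_inPn no_dup.
  have inj : {in N &, injective c}.
    move=> a b Na Nb cab; apply/eqP; apply: contraT => ab.
    by case/negP: (no_dup a Na); rewrite cab; apply: imset_f; rewrite in_setD1 eq_sym ab.
  by rewrite -leqNgt /seen (card_in_imset inj).
have unseen x : j \notin seen c x.
  by apply/imsetP=> -[y _ jE]; move: (unused y); rewrite -jE eqxx.
exists (recolour c u j); first exact: recolour_proper.
have sub : j |: seen c v \subset seen (recolour c u j) v.
  apply/subsetP=> a; rewrite in_setU1 => /orP[/eqP -> | /imsetP[y Ny ->]].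
    by apply/imsetP; exists u => //; rewrite ffunE eqxx.
  case: (eqVneq y u) => [-> | yu].
    case/imsetP: dup => u' /setD1P[u'u Nu'] ->.
    by apply/imsetP; exists u' => //; rewrite ffunE (negbTE u'u).
  by apply/imsetP; exists y => //; rewrite ffunE (negbTE yu).
by rewrite (leq_trans _ (subset_leq_card sub)) // cardsU1 unseen.
Qed.

Lemma seen_grows c v :
  proper_col e c -> k <= (degree e v).+1 -> (forall x, ~~ full_palette c x) ->
  exists2 c2, proper_col e c2 & #|seen c v| < #|seen c2 v|.
Proof.
move=> pc dv not_full.
have /subsetPn[j _ jN] : ~~ ([set: 'I_k] \subset palette c v).
  by move: (not_full v); rewrite /full_palette eqEsubset subsetT.
have [c1 [pc1 c1Nj c1_old]] := @recolour_class c j pc (fun x _ => not_full x).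
have seen_c1 : seen c1 v = seen c v.
  apply: eq_in_imset => y; rewrite inE => evy; apply: c1_old.
  by apply: contraNneq jN => <-; apply/setU1r/mem_seen.
have lt_deg : #|seen c1 v| < degree e v.
  have : #|j |: palette c v| <= k by rewrite -[k in _ <= k]card_ord max_card.
  rewrite cardsU1 jN cardsU1 (proper_col_notin_seen v pc) => le_k.
  by rewrite seen_c1 -ltnS; apply: leq_trans le_k dv.
have [c2 pc2 grows] := seen_grows_unused pc1 c1Nj lt_deg.
by exists c2; rewrite // -seen_c1.
Qed.

Lemma exists_full_palette v :
  colourable e k -> k <= (degree e v).+1 ->
  exists2 c, proper_col e c & exists x, full_palette c x.
Proof.
move=> /existsP[c0 pc0] dv.
case: (arg_maxnP (fun c => #|seen c v|) pc0) => c pc max_c.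
exists c => //; apply/existsP; apply: contraT => /existsPn not_full.
have [c2 pc2 grows] := seen_grows pc dv not_full.
by have := max_c c2 pc2; rewrite /= leqNgt grows.
Qed.

End Colourings.
End CriticalSets.

Theorem theorem4 (T : finType) (e : rel T) (k : nat) :
  simple_graph e -> connected_graph e -> 0 < #|T| -> chi e <= k ->
  (sn e k = #|T| <-> max_degree e + 1 < k) /\
  (lcs_low e k = #|T| <-> max_degree e + 1 < k).
Proof.
move=> simple _ T_gt0 chi_le_k.
have col_k : colourable e k := colourable_widen chi_le_k (colourable_chi simple).
case: (ltnP (max_degree e + 1) k) => kD.
  rewrite /sn /lcs_low !bigminn_eq_id // => c pc.
    by rewrite (lcs_eq_card simple pc kD).
  by rewrite (scs_eq_card simple pc kD).
have [v deg_v] := @bigop.eq_bigmax T (degree e) T_gt0.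
have deg_v_ge : k <= (degree e v).+1 by rewrite -deg_v -addn1.
have [c pc [x full]] := exists_full_palette simple col_k deg_v_ge.
have sn_lt : sn e k < #|T|.
  exact: leq_ltn_trans (bigminn_le_cond _ _ pc) (scs_lt_card simple full).
have lcs_lt : lcs_low e k < #|T|.
  exact: leq_ltn_trans (bigminn_le_cond _ _ pc) (lcs_lt_card simple full).
by split; split=> // E; rewrite E ltnn in sn_lt lcs_lt.
Qed.
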